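(* Let $K$ be a simplicial complex on the vertex set $[m]$, and let $A$ be a subgroup of $\mathbb{Z}_2^m$. Then the fixed point sets satisfy $(\mathbb{R}\mathcal{Z}_K)^A=(\mathbb{R}\mathcal{Z}_K)^{\operatorname{hull}(A)}$.
   Context: $\mathbb{R}\mathcal{Z}_K=\bigcup_{\sigma\in K}\{x\in[-1,1]^m: x_i\in\{\pm1\}\text{ for } i\notin\sigma\}$, with $\mathbb{Z}_2^m=\{\pm1\}^m$ acting by coordinatewise sign change. The coordinate hull $\operatorname{hull}(A)$ is the smallest coordinate subgroup containing $A$: $\operatorname{hull}(A)=\mathbb{Z}_2^I=\{x\in\mathbb{Z}_2^m: x_i=1\text{ for } i\notin I\}$ with $I=\{i\in[m]:\mathrm{proj}_i(A)\neq\{1\}\}$, $\mathrm{proj}_i$ the $i$-th coordinate projection. *)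

From HB Require Import structures.
From mathcomp Require Import all_boot all_order all_algebra.
From mathcomp Require Import reals.
Set Implicit Arguments. Unset Strict Implicit. Unset Printing Implicit Defensive.
Import Order.TTheory GRing.Theory Num.Theory.
Local Open Scope ring_scope.

Definition simplicial_complex (m : nat) (K : {set {set 'I_m}}) : Prop :=
  set0 \in K /\ forall s t : {set 'I_m}, s \in K -> t \subset s -> t \in K.

Definition point (R : realType) (m : nat) := 'I_m -> R.

Definition RZ (R : realType) (m : nat) (K : {set {set 'I_m}}) (x : point R m) : Prop :=
  exists2 s, s \in K &
    forall i : 'I_m, -1 <= x i <= 1 /\ (i \notin s -> x i = 1 \/ x i = -1).

(* Z_2^m = {+-1}^m, encoded as boolean vectors: g i = true means the i-th
   coordinate of g is -1.  Group law = coordinatewise xor. *)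
Definition Z2m (m : nat) := {ffun 'I_m -> bool}.
Definition z2one (m : nat) : Z2m m := [ffun _ => false].
Definition z2mul (m : nat) (g h : Z2m m) : Z2m m := [ffun i => g i (+) h i].

Definition is_subgroup (m : nat) (A : {set Z2m m}) : Prop :=
  z2one m \in A /\ forall g h, g \in A -> h \in A -> z2mul g h \in A.

Definition z2act (R : realType) (m : nat) (g : Z2m m) (x : point R m) : point R m :=
  fun i => (if g i then -1 else 1) * x i.

Definition fixed_set (R : realType) (m : nat) (X : point R m -> Prop)
  (A : {set Z2m m}) (x : point R m) : Prop :=
  X x /\ forall g, g \in A -> z2act g x = x.

(* Coordinate hull: Z_2^I with I = {i | proj_i(A) <> {1}}. *)
Definition hull_I (m : nat) (A : {set Z2m m}) : {set 'I_m} :=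
  [set i | [exists a in A, a i]].
Definition hull (m : nat) (A : {set Z2m m}) : {set Z2m m} :=
  [set g : Z2m m | [forall i, g i ==> (i \in hull_I A)]].

From HB Require Import structures.
From mathcomp Require Import all_boot all_order all_algebra.
From mathcomp Require Import reals.
From mathcomp Require Import lra.
From Stdlib Require Import FunctionalExtensionality.
Import Order.TTheory GRing.Theory Num.Theory.
Local Open Scope ring_scope.

(* A sign change g fixes x exactly when x vanishes on the coordinates that g
   flips, so x is fixed by A exactly when it vanishes on hull_I A; and A and
   hull A flip the same coordinates. *)

Section FixedPoints.

Variables (R : realType) (m : nat).
Implicit Types (g : Z2m m) (A : {set Z2m m}) (x : point R m).

Lemma z2act_fixP g x : z2act g x = x <-> forall i, g i -> x i = 0.
Proof.
split=> [gx i gi | x0].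
- by have := equal_f gx i; rewrite /z2act gi; lra.
- apply: functional_extensionality => i; rewrite /z2act.
  by case: ifP => [/x0 -> | _]; rewrite ?mulr0 ?mul1r.
Qed.

Lemma fixed_by_allP A x :
  (forall g, g \in A -> z2act g x = x) <-> forall i, i \in hull_I A -> x i = 0.
Proof.
split=> [fixA i | x0 g gA].
- by rewrite inE => /exists_inP [g /fixA /z2act_fixP]; apply.
- by apply/z2act_fixP => i gi; apply: x0; rewrite inE; apply/exists_inP; exists g.
Qed.

Lemma fixed_setE (X : point R m -> Prop) A x :
  fixed_set X A x <-> X x /\ forall i, i \in hull_I A -> x i = 0.
Proof. by rewrite /fixed_set fixed_by_allP. Qed.

Lemma sub_hull A : A \subset hull A.
Proof.
apply/subsetP => g gA; rewrite inE; apply/forallP => i; apply/implyP => gi.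
by rewrite inE; apply/exists_inP; exists g.
Qed.

Lemma hull_I_hull A : hull_I (hull A) = hull_I A.
Proof.
apply/setP => i; rewrite !inE; apply/exists_inP/exists_inP => -[g gA gi].
- move: gA; rewrite inE => /forallP /(_ i) /implyP /(_ gi).
  by rewrite inE => /exists_inP.
- by exists g; first exact: (subsetP (sub_hull A)).
Qed.

End FixedPoints.

Theorem lemma3p3 (R : realType) (m : nat) (K : {set {set 'I_m}})
  (A : {set Z2m m}) :
  simplicial_complex K -> is_subgroup A ->
  forall x : point R m,
    fixed_set (RZ K) A x <-> fixed_set (RZ K) (hull A) x.
Proof. by move=> _ _ x; rewrite !fixed_setE hull_I_hull. Qed.
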